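(* Let $J-CI=L^{(1)}\cdots L^{(p)}U$ be a Darboux factorization, and for $j=0,\ldots,p-1$ let $g^{(j)}_{k,s}$ be the entries (rows and columns indexed by $1,2,\ldots$) of $G^{(j)}=L^{(j+2)}\cdots L^{(p)}UL^{(1)}\cdots L^{(j)}$ (empty products being the identity). For each $j=0,1,\ldots,p$ let $\{\mathcal{L}^{(j)}_n\}$ be the dual sequence of $\{P^{(j)}_n\}$, with $\mathcal{L}^{(0)}_n=\mathcal{L}_n$ and $\mathcal{L}^{(j)}_{-1}:=0$. Then for each $j=0,\ldots,p-1$ and $n=0,1,\ldots$: $$\mathcal{L}^{(j+1)}_n=\mathcal{L}^{(j)}_n+\gamma_{n(p+1)+j+2}\,\mathcal{L}^{(j)}_{n+1},$$ $$(z-C)\mathcal{L}^{(j)}_n=\mathcal{L}^{(j+1)}_{n-1}+\sum_{s=0}^{p-1}g^{(j)}_{n+s+1,n+1}\,\mathcal{L}^{(j+1)}_{n+s},$$ and, for all $n\ge0$, $$(z-C)\mathcal{L}_n=\mathcal{L}^{(p)}_{n-1}-\frac{P_{n+1}(C)}{P_n(C)}\mathcal{L}^{(p)}_n.$$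
   Context: Fix $p\in\mathbb{N}$. Let $J=(a_{n,m})_{n,m\ge0}$ be an infinite matrix with $a_{n,n+1}=1$, $a_{n,m}=0$ for $m>n+1$ or $m<n-p$, and $a_{n+p,n}\neq0$ for all $n\ge0$. Define polynomials by $P_{-p}=\cdots=P_{-1}=0$, $P_0\equiv1$, $P_{n+1}(z)=(z-a_{n,n})P_n(z)-\sum_{i=1}^p a_{n,n-i}P_{n-i}(z)$ for $n\ge0$. Fix $C\in\mathbb{C}$ with $P_n(C)\neq0$ for all $n\ge1$. A Darboux factorization of $J-CI$ is a factorization $J-CI=L^{(1)}L^{(2)}\cdots L^{(p)}U$ where, indexing rows and columns by $1,2,\ldots$, $U$ is upper bidiagonal with $U_{k,k}=\gamma_{(k-1)(p+1)+1}$, $U_{k,k+1}=1$, and for $j=1,\ldots,p$, $L^{(j)}$ is lower bidiagonal with ones on the diagonal and $L^{(j)}_{k+1,k}=\gamma_{(k-1)(p+1)+j+1}\neq0$ for all $k\ge1$ (the $\gamma_i$ being complex numbers). Its Darboux transformations are $J^{(j)}=CI+L^{(j+1)}\cdots L^{(p)}UL^{(1)}\cdots L^{(j)}$, $j=1,\ldots,p$; also $J^{(0)}:=J$. Each $J^{(j)}$ is lower Hessenberg with ones on the superdiagonal, and $\{P^{(j)}_n\}_{n\ge0}$ denotes the unique sequence of polynomials with $P^{(j)}_0\equiv1$ such that $v^{(j)}(z)=(P^{(j)}_0(z),P^{(j)}_1(z),\ldots)^T$ satisfies $J^{(j)}v^{(j)}(z)=zv^{(j)}(z)$; $P^{(0)}_n=P_n$.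 For a sequence of polynomials $\{Q_n\}$ with $\deg Q_n=n$, its dual sequence is the sequence of linear functionals $\{\mathcal{M}_n\}$ on the polynomial space with $\mathcal{M}_j[Q_i]=\delta_{i,j}$. For a functional $\mu$, $(z-C)\mu$ is the functional $q\mapsto\mu[(z-C)q]$. *)

From HB Require Import structures.
From mathcomp Require Import all_boot all_order all_algebra.
Set Implicit Arguments. Unset Strict Implicit. Unset Printing Implicit Defensive.
Import Order.TTheory GRing.Theory Num.Theory.
Local Open Scope ring_scope.

Section Darboux.
Variable R : fieldType.

(* Infinite matrices, rows/columns indexed 0,1,2,... (the paper's row k
   of the factors, 1-based, is our row k-1). *)
Definition imx := nat -> nat -> R.

(* Product of infinite matrices A*B whose left factor satisfies
   A k m = 0 for m > k+1 (true for every left factor used below: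
   all are single bidiagonal factors, products are right-folded). *)
Definition imul (A B : imx) : imx :=
  fun k s => \sum_(m < k.+2) A k m * B m s.

Definition iid : imx := fun k s => (k == s)%:R.

Definition iprod (l : seq imx) : imx := foldr imul iid l.

(* U : U_{k,k} = gamma_{(k-1)(p+1)+1}, U_{k,k+1} = 1 (1-based). *)
Definition Umx (p : nat) (gam : nat -> R) : imx :=
  fun k s => if s == k then gam (k * p.+1 + 1)%N
             else if s == k.+1 then 1 else 0.

(* L^(j): ones on the diagonal, L_{k+1,k} = gamma_{(k-1)(p+1)+j+1} (1-based). *)
Definition Lmx (p : nat) (gam : nat -> R) (j : nat) : imx :=
  fun k s => if s == k then 1
             else if k == s.+1 then gam (s * p.+1 + j + 1)%N else 0.

Definition Lrange p gam (i len : nat) : seq imx :=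
  [seq Lmx p gam l | l <- iota i len].

Definition Gmx p gam (j : nat) : imx :=
  iprod (Lrange p gam j.+2 (p - j.+1) ++ Umx p gam :: Lrange p gam 1 j).

Definition Jmx p gam (C : R) (j : nat) : imx :=
  fun k s => C * (k == s)%:R
             + iprod (Lrange p gam j.+1 (p - j) ++ Umx p gam :: Lrange p gam 1 j) k s.

(* Polynomials P_n from the recurrence; Pl n = [:: P_n; P_(n-1); ...; P_0]. *)
Fixpoint Pl (p : nat) (a : imx) (n : nat) : seq {poly R} :=
  match n with
  | 0 => [:: 1]
  | n'.+1 => let s := Pl p a n' in
      (('X - (a n' n')%:P) * s`_0
        - \sum_(1 <= i < p.+1) a n' (n' - i)%N *: s`_i) :: s
  end.

Definition Prec (p : nat) (a : imx) (n : nat) : {poly R} := (Pl p a n)`_0.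

(* v(z) = (Q_0, Q_1, ...)^T satisfies H v(z) = z v(z), for H lower
   Hessenberg (H n m = 0 for m > n+1). *)
Definition eigen_seq (H : imx) (Q : nat -> {poly R}) : Prop :=
  Q 0%N = 1 /\ forall n, \sum_(m < n.+2) H n m *: Q m = 'X * Q n.

Definition lin_functional (f : {poly R} -> R) : Prop :=
  forall (c : R) (q r : {poly R}), f (c *: q + r) = c * f q + f r.

Definition dual_seq (Q : nat -> {poly R}) (M : nat -> {poly R} -> R) : Prop :=
  forall n, lin_functional (M n) /\ forall i, M n (Q i) = (i == n)%:R.

Definition zmC (C : R) (mu : {poly R} -> R) : {poly R} -> R :=
  fun q => mu (('X - C%:P) * q).

End Darboux.

From HB Require Import structures.
From mathcomp Require Import all_boot all_order all_algebra.
From mathcomp Require Import ring zify.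
From Stdlib Require Import FunctionalExtensionality.
Set Implicit Arguments. Unset Strict Implicit. Unset Printing Implicit Defensive.
Import GRing.Theory.
Local Open Scope ring_scope.

(* Since [J^(j) - C = L^(j+1) G^(j)] and [J^(j+1) - C = G^(j) L^(j+1)], the vector
   [L^(j+1) P^(j+1)] is an eigenvector of [J^(j)] starting with [1], hence equals
   [P^(j)]; multiplying by [G^(j)] gives [(z - C) P^(j+1) = G^(j) P^(j)].  In the
   same way [(z - C) P^(p) = U P^(0)], and evaluating it at [C] yields
   [gamma_(n(p+1)+1) = - P_(n+1)(C) / P_n(C)].  Each relation [Q = M Q'] between
   bases with [deg Q_n = n] then transposes to the dual functionals, because
   [f = sum_k f(Q_k) L_k] for every linear functional [f]. *)

Section InfiniteMatrices.
Variable R : fieldType.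
Implicit Types (A B M : imx R) (v : nat -> {poly R}).

Definition uband (u : nat) M := forall k s, (k + u < s)%N -> M k s = 0.
Definition lband (d : nat) M := forall k s, (s + d < k)%N -> M k s = 0.

(* Row [n] only reads the columns [m <= n + 1]: this is the matrix-vector
   product exactly when [uband 1 M]. *)
Definition iapply M v : nat -> {poly R} :=
  fun n => \sum_(m < n.+2) M n m *: v m.

Lemma uband_le u u' M : uband u M -> (u <= u')%N -> uband u' M.
Proof. by move=> hM le k s lt; apply: hM; lia. Qed.

Lemma uband_imul uA uB A B :
  uband uA A -> uband uB B -> (uA <= 1)%N -> uband (uA + uB) (imul A B).
Proof.
move=> hA hB hu k s lt; rewrite /imul big1 // => m _.
case: (leqP m (k + uA)) => hm; last by rewrite hA ?mul0r.
by rewrite hB ?mulr0 //; lia.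
Qed.

Lemma lband_imul dA dB A B :
  lband dA A -> lband dB B -> lband (dA + dB) (imul A B).
Proof.
move=> hA hB k s lt; rewrite /imul big1 // => m _.
case: (ltnP (m + dA) k) => hm; first by rewrite hA ?mul0r.
by rewrite hB ?mulr0 //; lia.
Qed.

Lemma imul_corner uA uB A B k : uband uA A -> uband uB B -> (uA <= 1)%N ->
  imul A B k (k + uA + uB)%N = A k (k + uA)%N * B (k + uA)%N (k + uA + uB)%N.
Proof.
move=> hA hB hu; rewrite /imul.
have hk : (k + uA < k.+2)%N by lia.
rewrite (bigD1 (Ordinal hk)) //= big1 ?addr0 // => m hm.
have {}hm : val m != (k + uA)%N by apply: contraNneq hm => e; apply/eqP/val_inj.
case: (ltngtP m (k + uA)) hm => // h _; last by rewrite hA ?mul0r.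
by rewrite hB ?mulr0 //; lia.
Qed.

Lemma iapply_widen M v k N : uband 1 M -> (k.+2 <= N)%N ->
  \sum_(m < N) M k m *: v m = iapply M v k.
Proof.
move=> hM hN; rewrite /iapply (big_ord_widen N (fun m => M k m *: v m) hN).
rewrite [RHS]big_mkcond /=; apply: eq_bigr => m _.
by case: ifP => // /negbT h; rewrite hM ?scale0r //; lia.
Qed.

Lemma iapply_imul uA uB A B v : uband uA A -> uband uB B -> (uA + uB <= 1)%N ->
  iapply (imul A B) v = iapply A (iapply B v).
Proof.
move=> hA hB hu; apply: functional_extensionality => n.
have hB1 : uband 1 B by apply: uband_le hB _; lia.
have hAB : uband 1 (imul A B).
  by apply: uband_le (uband_imul hA hB _) (hu); lia.
rewrite -(iapply_widen v hAB (leqnSn n.+2)) /iapply.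
under [RHS]eq_bigr => m _.
  rewrite -/(iapply B v m) -(iapply_widen v hB1 (_ : (m.+2 <= n.+3)%N)); last first.
    by case: m => /= m; lia.
  rewrite scaler_sumr; under eq_bigr => s _ do rewrite scalerA.
over.
by rewrite exchange_big /=; apply: eq_bigr => s _; rewrite /imul scaler_suml.
Qed.

Lemma iapply_iid v : iapply (iid R) v = v.
Proof.
apply: functional_extensionality => n; rewrite /iapply /iid.
rewrite (bigD1 (Ordinal (leqnSn n.+1))) //= eqxx scale1r big1 ?addr0 // => m hm.
case: eqP => [h|]; last by rewrite scale0r.
by move: hm; rewrite -h; case/eqP; apply/val_inj.
Qed.

Lemma iapply_scalel (q : {poly R}) M v n :
  iapply M (fun m => q * v m) n = q * iapply M v n.
Proof. by rewrite /iapply mulr_sumr; apply: eq_bigr => m _; rewrite -!mul_polyC mulrCA. Qed.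

Lemma uband_iid : uband 0 (iid R).
Proof. by move=> k s h; rewrite /iid; case: eqP => // e; lia. Qed.

Lemma lband_iid : lband 0 (iid R).
Proof. by move=> k s h; rewrite /iid; case: eqP => // e; lia. Qed.

End InfiniteMatrices.

Section DarbouxFactors.
Variables (R : fieldType) (p : nat) (gam : nat -> R).
Implicit Types (B : imx R) (v : nat -> {poly R}) (s : seq nat).
Local Notation L := (Lmx p gam).
Local Notation U := (Umx p gam).

Definition Lact s v := foldr (@iapply R) v (map L s).
Definition fprod s1 s2 : imx R := iprod (map L s1 ++ U :: map L s2).
Definition Dmx j := fprod (iota j.+1 (p - j)) (iota 1 j).

Lemma uband_L i : uband 0 (L i).
Proof. by move=> k s h; rewrite /Lmx !ifF //; apply/eqP; lia. Qed.

Lemma lband_L i : lband 1 (L i).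
Proof. by move=> k s h; rewrite /Lmx !ifF //; apply/eqP; lia. Qed.

Lemma L_diag i k : L i k k = 1.
Proof. by rewrite /Lmx eqxx. Qed.

Lemma uband_U : uband 1 U.
Proof. by move=> k s h; rewrite /Umx !ifF //; apply/eqP; lia. Qed.

Lemma lband_U : lband 0 U.
Proof. by move=> k s h; rewrite /Umx !ifF //; apply/eqP; lia. Qed.

Lemma U_super k : U k (k + 1)%N = 1.
Proof. by rewrite /Umx; case: eqP => [|_]; [lia | rewrite addn1 eqxx]. Qed.

Lemma uband_foldL s B u :
  uband u B -> (u <= 1)%N -> uband u (foldr (@imul R) B (map L s)).
Proof. by move=> hB hu; elim: s => //= i s IH; apply: uband_imul (uband_L i) IH _. Qed.

Lemma lband_foldL s B d :
  lband d B -> lband (d + size s) (foldr (@imul R) B (map L s)).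
Proof.
move=> hB; elim: s => [|i s IH] /=; first by rewrite addn0.
by rewrite -add1n addnCA; apply: lband_imul (lband_L i) IH.
Qed.

Lemma foldL_super s B u k : uband u B -> (u <= 1)%N ->
  foldr (@imul R) B (map L s) k (k + u)%N = B k (k + u)%N.
Proof.
move=> hB hu; elim: s => //= i s IH.
have := imul_corner k (uband_L i) (uband_foldL s hB hu) (leq0n 1).
by rewrite !addn0 L_diag mul1r IH.
Qed.

Lemma iapply_foldL s B u v : uband u B -> (u <= 1)%N ->
  iapply (foldr (@imul R) B (map L s)) v = Lact s (iapply B v).
Proof.
move=> hB hu; elim: s => //= i s IH.
by rewrite (iapply_imul _ (uband_L i) (uband_foldL s hB hu)) // IH.
Qed.

Let UL s2 := imul U (foldr (@imul R) (iid R) (map L s2)).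

Let fprodE s1 s2 : fprod s1 s2 = foldr (@imul R) (UL s2) (map L s1).
Proof. by rewrite /fprod /iprod foldr_cat. Qed.

Let uband_UL s2 : uband 1 (UL s2).
Proof.
by rewrite /UL -[1%N]addn0; apply: uband_imul uband_U (uband_foldL s2 (uband_iid R) _) _.
Qed.

Lemma uband_fprod s1 s2 : uband 1 (fprod s1 s2).
Proof. by rewrite fprodE; apply: uband_foldL. Qed.

Lemma lband_fprod s1 s2 : lband (size s2 + size s1) (fprod s1 s2).
Proof.
rewrite fprodE; apply: lband_foldL; rewrite -[size s2]add0n.
by apply: lband_imul lband_U _; rewrite -[size s2]add0n; apply: lband_foldL (lband_iid R).
Qed.

Lemma fprod_super s1 s2 k : fprod s1 s2 k (k + 1)%N = 1.
Proof.
rewrite fprodE (foldL_super _ _ (uband_UL s2)) //.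
have := imul_corner k uband_U (uband_foldL s2 (uband_iid R) (leq0n 1)) (leqnn 1).
rewrite !addn0 /UL => ->.
have := foldL_super s2 (k + 1) (uband_iid R) (leq0n 1); rewrite addn0 => ->.
by rewrite U_super /iid eqxx mulr1.
Qed.

Lemma iapply_fprod s1 s2 v :
  iapply (fprod s1 s2) v = Lact s1 (iapply U (Lact s2 v)).
Proof.
rewrite fprodE (iapply_foldL _ _ (uband_UL s2)) //.
rewrite (iapply_imul _ uband_U (uband_foldL s2 (uband_iid R) (leq0n 1))) //.
by rewrite (iapply_foldL _ _ (uband_iid R)) // iapply_iid.
Qed.

Lemma iapply_L i v n :
  iapply (L i) v n = v n + (if n is n'.+1 then gam (n' * p.+1 + i + 1)%N *: v n' else 0).
Proof.
rewrite /iapply !big_ord_recr /= (@uband_L i n n.+1) ?addn0 //.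
rewrite L_diag scale0r addr0 scale1r.
case: n => [|n]; first by rewrite big_ord0 add0r addr0.
rewrite big_ord_recr /= big1 ?add0r => [|m _].
  by rewrite /Lmx (ltn_eqF (ltnSn n)) eqxx addrC.
by rewrite (lband_L i) ?scale0r //=; case: m => /= m; lia.
Qed.

Lemma iapply_U v n : iapply U v n = gam (n * p.+1 + 1)%N *: v n + v n.+1.
Proof.
rewrite /iapply !big_ord_recr /= big1 ?add0r => [|m _].
  by rewrite /Umx eqxx (gtn_eqF (ltnSn n)) eqxx scale1r.
by rewrite lband_U ?scale0r //=; case: m => /= m; lia.
Qed.

Lemma GmxE j : Gmx p gam j = fprod (iota j.+2 (p - j.+1)) (iota 1 j).
Proof. by []. Qed.

Lemma iapply_Jmx C j v n : iapply (Jmx p gam C j) v n = C *: v n + iapply (Dmx j) v n.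
Proof.
rewrite /iapply /Jmx; under eq_bigr => m _ do rewrite scalerDl.
rewrite big_split /= (bigD1 (Ordinal (leqnSn n.+1))) //= eqxx mulr1 big1 ?addr0 // => m hm.
case: eqP => [e|_]; last by rewrite mulr0 scale0r.
by case/eqP: hm; apply: val_inj; rewrite /= {2}e.
Qed.

Lemma Jmx_super C j k : Jmx p gam C j k k.+1 = 1.
Proof.
rewrite /Jmx (ltn_eqF (ltnSn k)) mulr0 add0r.
by have := fprod_super (iota j.+1 (p - j)) (iota 1 j) k; rewrite addn1.
Qed.

Lemma Dmx_shiftl j v : (j < p)%N ->
  iapply (Dmx j) v = iapply (L j.+1) (iapply (Gmx p gam j) v).
Proof. by move=> hj; rewrite /Dmx GmxE !iapply_fprod -(subnSK hj). Qed.

Lemma Dmx_shiftr j v : iapply (Dmx j.+1) v = iapply (Gmx p gam j) (iapply (L j.+1) v).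
Proof.
rewrite /Dmx GmxE !iapply_fprod.
have -> : iota 1 j.+1 = iota 1 j ++ [:: j.+1] by rewrite -[j.+1]addn1 iotaD add1n addn1.
by rewrite /Lact map_cat foldr_cat.
Qed.

Lemma Dmx_last v : iapply (Dmx p) v = iapply U (Lact (iota 1 p) v).
Proof. by rewrite /Dmx iapply_fprod subnn. Qed.
End DarbouxFactors.

Section EigenSequences.
Variable R : fieldType.
Implicit Types (H : imx R) (Q : nat -> {poly R}).

Lemma eigen_seq_rec H Q n : eigen_seq H Q -> H n n.+1 = 1 ->
  Q n.+1 = 'X * Q n - \sum_(m < n.+1) H n m *: Q m.
Proof.
by case=> _ /(_ n); rewrite big_ord_recr /= => <- ->; rewrite scale1r addrC addrK.
Qed.

Lemma eigen_seq_unique H Q Q' : (forall n, H n n.+1 = 1) ->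
  eigen_seq H Q -> eigen_seq H Q' -> Q = Q'.
Proof.
move=> hH hQ hQ'; apply: functional_extensionality; elim/ltn_ind => -[_|n IH].
  by rewrite hQ.1 hQ'.1.
rewrite (eigen_seq_rec hQ (hH n)) (eigen_seq_rec hQ' (hH n)) IH //.
by congr (_ - _); apply: eq_bigr => i _; rewrite IH.
Qed.

Lemma size_eigen_seq H Q : (forall n, H n n.+1 = 1) ->
  eigen_seq H Q -> forall n, size (Q n) = n.+1.
Proof.
move=> hH hQ; elim/ltn_ind => -[_|n IH]; first by rewrite hQ.1 size_poly1.
have hX : size ('X * Q n) = n.+2 by rewrite mulrC size_mulX -?size_poly_eq0 IH.
rewrite (eigen_seq_rec hQ (hH n)) size_polyDl hX // size_polyN ltnS.
apply: leq_trans (size_sum _ _ _) _; apply/bigmax_leqP => i _.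
by apply: leq_trans (size_scale_leq _ _) _; rewrite IH.
Qed.
End EigenSequences.

Section LinearFunctionals.
Variable R : fieldType.
Implicit Types (f g : {poly R} -> R) (Q : nat -> {poly R}).

Lemma lin_functional0 f : lin_functional f -> f 0 = 0.
Proof.
move=> hf; have := hf 1 0 0; rewrite scale1r addr0 mul1r => h.
by apply: (addrI (f 0)); rewrite addr0 -h.
Qed.

Lemma lin_functionalZ f c q : lin_functional f -> f (c *: q) = c * f q.
Proof. by move=> hf; rewrite -[c *: q]addr0 hf lin_functional0 ?addr0. Qed.

Lemma lin_functionalD f q r : lin_functional f -> f (q + r) = f q + f r.
Proof. by move=> hf; have := hf 1 q r; rewrite scale1r mul1r. Qed.

Lemma lin_functional_sum f (c : nat -> R) Q N : lin_functional f ->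
  f (\sum_(m < N) c m *: Q m) = \sum_(m < N) c m * f (Q m).
Proof.
move=> hf; elim: N => [|N IH]; first by rewrite !big_ord0 lin_functional0.
by rewrite !big_ord_recr /= lin_functionalD // lin_functionalZ // IH.
Qed.

Lemma lin_functional_zmC f C : lin_functional f -> lin_functional (zmC C f).
Proof. by move=> hf c x y; rewrite /zmC mulrDr -scalerAr hf. Qed.

Lemma lin_functional_eq0 f Q : lin_functional f ->
  (forall n, size (Q n) = n.+1) -> (forall n, f (Q n) = 0) -> forall q, f q = 0.
Proof.
move=> hf hQ hfQ q; elim: {q}(size q) {-2}q (leqnn (size q)) => [|N IH] q hq.
  by move: hq; rewrite leqn0 size_poly_eq0 => /eqP ->; rewrite lin_functional0.
have hlead : (Q N)`_N != 0.
  by rewrite -[_`_N]/((Q N)`_(N.+1.-1)) -(hQ N) -lead_coefE lead_coef_eq0 -size_poly_eq0 hQ.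
set c := q`_N / (Q N)`_N.
rewrite -(subrK (c *: Q N) q) lin_functionalD // lin_functionalZ // hfQ mulr0 addr0.
apply: IH; apply/leq_sizeP => i hi; rewrite coefB coefZ.
have [hNi|->] : (N < i)%N \/ i = N by lia.
  by rewrite !nth_default ?mulr0 ?subrr ?hQ //; apply: leq_trans hq _.
by rewrite divfK ?subrr.
Qed.

Lemma lin_functional_eq f g Q : lin_functional f -> lin_functional g ->
  (forall n, size (Q n) = n.+1) -> (forall n, f (Q n) = g (Q n)) ->
  forall q, f q = g q.
Proof.
move=> hf hg hQ hfg q; apply/eqP; rewrite -subr_eq0; apply/eqP.
apply: (@lin_functional_eq0 (fun q => f q - g q) Q) => // [c x y|n].
  by rewrite hf hg opprD addrACA mulrBr addrA.
by rewrite hfg subrr.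
Qed.

Lemma sum_mul_eq_nat (F : nat -> R) N (i : nat) :
  \sum_(k < N) F k * (i == k)%:R = if (i < N)%N then F i else 0.
Proof.
rewrite -(big_ord1_eq (@GRing.add R) F) [RHS]big_mkcond /=; apply: eq_bigr => k _.
by rewrite eq_sym; case: eqP; rewrite ?mulr1 ?mulr0.
Qed.

Lemma dual_seq_iapply (Mat : imx R) Q M n k : uband 1 Mat -> dual_seq Q M ->
  M n (iapply Mat Q k) = Mat k n.
Proof.
move=> hMat hM; rewrite /iapply lin_functional_sum; last exact: (hM n).1.
under eq_bigr => m _ do rewrite (hM n).2 eq_sym.
by rewrite sum_mul_eq_nat; case: ltnP => // h; rewrite hMat //; lia.
Qed.

Lemma dual_seq_transpose (Mat : imx R) Q M f n d :
  (forall k, size (Q k) = k.+1) -> dual_seq Q M -> lin_functional f ->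
  lband d Mat -> (forall k, f (Q k) = Mat k n) ->
  forall q, f q = \sum_(k < n + d.+1) Mat k n * M k q.
Proof.
move=> hQ hM hf hMat hfQ; apply: lin_functional_eq hQ _ => // [c x y|i].
  rewrite mulr_sumr -big_split /=; apply: eq_bigr => k _.
  by rewrite (hM k).1 mulrDr mulrCA.
rewrite hfQ; under eq_bigr => k _ do rewrite (hM k).2.
by rewrite (sum_mul_eq_nat (Mat^~ n)); case: ltnP => // h; rewrite hMat //; lia.
Qed.

Lemma sum_column_super (Mat : imx R) (F : nat -> R) n N :
  uband 1 Mat -> (forall k, Mat k k.+1 = 1) ->
  \sum_(k < n + N) Mat k n * F k
    = (if n is n'.+1 then F n' else 0) + \sum_(s < N) Mat (n + s)%N n * F (n + s)%N.
Proof.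
move=> hMat hsup; rewrite big_split_ord /=; congr (_ + _).
case: n => [|n]; first by rewrite big_ord0.
rewrite big_ord_recr /= hsup mul1r big1 ?add0r // => k _.
by rewrite hMat ?mul0r //; case: k => /= k; lia.
Qed.
End LinearFunctionals.

Section Recurrence.
Variables (R : fieldType) (p : nat) (a : imx R).

Lemma nth_Pl n i : (Pl p a n)`_i = if (i <= n)%N then Prec p a (n - i) else 0.
Proof. by elim: n i => [|n IH] [|i] //=; rewrite nth_nil. Qed.

Lemma eigen_seq_Prec : (forall n, a n n.+1 = 1) ->
  (forall n m, (m + p < n)%N -> a n m = 0) -> eigen_seq a (Prec p a).
Proof.
move=> hsup hband; split=> // n.
rewrite !big_ord_recr /= hsup scale1r.
set G := fun i => a n (n - i)%N *: (Pl p a n)`_i.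
have -> : Prec p a n.+1 = ('X - (a n n)%:P) * Prec p a n - \sum_(1 <= i < p.+1) G i by [].
have hlow : \sum_(i < n) a n i *: Prec p a i = \sum_(1 <= i < n.+1) G i.
  rewrite -(big_mkord xpredT (fun i => a n i *: Prec p a i)) big_nat_rev big_add1 /=.
  apply: eq_big_nat => i /andP [_ hi]; rewrite /G nth_Pl hi add0n subnS /=.
  by congr (_ *: Prec p a _); lia.
have sum_upto k : (1 <= k <= (n + p).+1)%N -> (forall i, (k <= i)%N -> G i = 0) ->
    \sum_(1 <= i < (n + p).+1) G i = \sum_(1 <= i < k) G i.
  move=> /andP[h1 h2] hG; rewrite (big_cat_nat h1 h2) /= [X in _ + X]big_nat_cond.
  rewrite [X in _ + X]big1 ?addr0 //.
  by move=> i /andP[/andP[hi _] _]; apply: hG.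
(* Terms with [i > p] vanish by the band of [a], those with [i > n]
   because [(Pl p a n)`_i = 0]. *)
have hband_sum : \sum_(1 <= i < p.+1) G i = \sum_(1 <= i < n.+1) G i.
  rewrite -!sum_upto ?ltnS ?leq_addl ?leq_addr // => i hi; rewrite /G nth_Pl;
    by case: leqP => hin; rewrite ?scaler0 // hband ?scale0r //; lia.
by rewrite hlow -hband_sum /G -mul_polyC mulrBl; ring.
Qed.
End Recurrence.

Section DarbouxTransforms.
Variables (R : fieldType) (p : nat) (gam : nat -> R) (C : R).
Variable P : nat -> nat -> {poly R}.
Hypothesis P_eigen : forall j, (j <= p)%N -> eigen_seq (Jmx p gam C j) (P j).
Local Notation L := (Lmx p gam).
Local Notation U := (Umx p gam).
Local Notation G := (Gmx p gam).

Lemma size_P j : (j <= p)%N -> forall n, size (P j n) = n.+1.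
Proof. by move=> hj; apply: size_eigen_seq (Jmx_super p gam C j) (P_eigen hj). Qed.

Lemma Dmx_P j : (j <= p)%N -> iapply (Dmx p gam j) (P j) = fun n => ('X - C%:P) * P j n.
Proof.
move=> hj; apply: functional_extensionality => n; have := (P_eigen hj).2 n.
by rewrite -/(iapply _ _ n) iapply_Jmx mulrBl -mul_polyC => <-; rewrite addrC addKr.
Qed.

Lemma P_Darboux j : (j < p)%N -> P j = iapply (L j.+1) (P j.+1).
Proof.
move=> hj; apply: eigen_seq_unique (Jmx_super p gam C j) (P_eigen (ltnW hj)) _.
split; first by rewrite iapply_L addr0 (P_eigen hj).1.
move=> n; rewrite -/(iapply _ _ n) iapply_Jmx (Dmx_shiftl gam _ hj) -Dmx_shiftr Dmx_P //.
by rewrite iapply_scalel -mul_polyC mulrBl addrC subrK.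
Qed.

Lemma Gmx_P j n : (j < p)%N -> iapply (G j) (P j) n = ('X - C%:P) * P j.+1 n.
Proof. by move=> hj; rewrite (P_Darboux hj) -Dmx_shiftr Dmx_P. Qed.

Lemma P0_Lact : P 0 = Lact p gam (iota 1 p) (P p).
Proof.
suff Pj_Lact t j : (j + t = p)%N -> P j = Lact p gam (iota j.+1 t) (P p).
  exact: Pj_Lact.
elim: t j => [|t IH] j hjt; first by rewrite addn0 in hjt; rewrite hjt.
by rewrite (P_Darboux (_ : j < p)%N) ?(IH j.+1) //; lia.
Qed.

Lemma Umx_P n : iapply U (P 0) n = ('X - C%:P) * P p n.
Proof. by rewrite P0_Lact -Dmx_last Dmx_P. Qed.

Lemma P0_eval_succ n : (P 0 n.+1).[C] = - (gam (n * p.+1 + 1)%N * (P 0 n).[C]).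
Proof.
have := congr1 (horner^~ C) (Umx_P n).
rewrite iapply_U /= hornerD hornerZ hornerM hornerXsubC subrr mul0r.
by move/eqP; rewrite addrC addr_eq0 => /eqP.
Qed.

Variable Lf : nat -> nat -> {poly R} -> R.
Hypothesis Lf_dual : forall j, (j <= p)%N -> dual_seq (P j) (Lf j).

Lemma Lf_Darboux j n q : (j < p)%N ->
  Lf j.+1 n q = Lf j n q + gam (n * p.+1 + j + 2)%N * Lf j n.+1 q.
Proof.
move=> hj; have hLf := Lf_dual (ltnW hj).
have hcol k : Lf j.+1 n (P j k) = L j.+1 k n.
  rewrite (P_Darboux hj) dual_seq_iapply //; last exact: Lf_dual.
  exact: uband_le (uband_L _ _ _) _.
rewrite (dual_seq_transpose (size_P (ltnW hj)) hLf (Lf_dual hj n).1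
  (@lband_L _ p gam j.+1) hcol).
rewrite addn2 !big_ord_recr /= big1 ?add0r => [|k _]; last first.
  by rewrite uband_L ?mul0r //; case: k => /= k; lia.
rewrite L_diag mul1r /Lmx (ltn_eqF (ltnSn n)) eqxx.
by congr (_ + gam _ * _); lia.
Qed.

Lemma Lf_zmC_Gmx j n q : (j < p)%N ->
  zmC C (Lf j n) q = (if n is n'.+1 then Lf j.+1 n' q else 0)
                     + \sum_(s < p) G j (n + s)%N n * Lf j.+1 (n + s)%N q.
Proof.
move=> hj; have hLf := Lf_dual (ltnW hj).
have hcol k : zmC C (Lf j n) (P j.+1 k) = G j k n.
  rewrite /zmC -Gmx_P // dual_seq_iapply //; exact: uband_fprod.
have hband : lband p.-1 (G j).
  have := @lband_fprod _ p gam (iota j.+2 (p - j.+1)) (iota 1 j).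
  by rewrite !size_iota -GmxE; congr lband; lia.
rewrite (dual_seq_transpose (size_P hj) (Lf_dual hj) (lin_functional_zmC _ (hLf n).1)
  hband hcol) prednK ?(leq_ltn_trans (leq0n j) hj) //.
rewrite (sum_column_super (Mat := G j) (Lf j.+1 ^~ q)) // => [|k].
  exact: uband_fprod.
by rewrite GmxE -[k.+1]addn1 fprod_super.
Qed.

Lemma Lf_zmC_Umx n q :
  zmC C (Lf 0 n) q = (if n is n'.+1 then Lf p n' q else 0) + gam (n * p.+1 + 1)%N * Lf p n q.
Proof.
have hcol k : zmC C (Lf 0 n) (P p k) = U k n.
  rewrite /zmC -Umx_P dual_seq_iapply //; [exact: uband_U | exact: Lf_dual].
rewrite (dual_seq_transpose (size_P (leqnn p)) (Lf_dual (leqnn p))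
  (lin_functional_zmC _ (Lf_dual (leq0n p) n).1) (@lband_U _ p gam) hcol).
rewrite (sum_column_super (Mat := U) (Lf p ^~ q)).
- by rewrite big_ord1 addn0 /Umx eqxx.
- exact: uband_U.
- by move=> k; rewrite -[k.+1]addn1 U_super.
Qed.
End DarbouxTransforms.

Theorem lemma3 (R : fieldType) (p : nat) (a : imx R) (C : R) (gam : nat -> R)
  (P : nat -> nat -> {poly R}) (Lf : nat -> nat -> {poly R} -> R) :
  (0 < p)%N ->
  (* J = (a_{n,m}) *)
  (forall n, a n n.+1 = 1) ->
  (forall n m, (n.+1 < m)%N -> a n m = 0) ->
  (forall n m, (m + p < n)%N -> a n m = 0) ->
  (forall n, a (n + p)%N n != 0) ->
  (* P_n(C) <> 0 for n >= 1 *)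
  (forall n, (1 <= n)%N -> (Prec p a n).[C] != 0) ->
  (* Darboux factorization J - C I = L^(1) ... L^(p) U *)
  (forall j k, (1 <= j <= p)%N -> gam (k * p.+1 + j + 1)%N != 0) ->
  (forall k s, a k s - C * (k == s)%:R
     = iprod (Lrange p gam 1 p ++ [:: Umx p gam]) k s) ->
  (* P^(0) = P, P^(j) the polynomial eigenvector of J^(j) *)
  (forall n, P 0%N n = Prec p a n) ->
  (forall j, (1 <= j <= p)%N -> eigen_seq (Jmx p gam C j) (P j)) ->
  (* L^(j)_n dual sequence of P^(j)_n *)
  (forall j, (j <= p)%N -> dual_seq (P j) (Lf j)) ->
  (forall j n, (j < p)%N ->
     (forall q, Lf j.+1 n q = Lf j n q + gam (n * p.+1 + j + 2)%N * Lf j n.+1 q)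
     /\ (forall q, zmC C (Lf j n) q =
           (if n is n'.+1 then Lf j.+1 n' q else 0)
           + \sum_(s < p) Gmx p gam j (n + s)%N n * Lf j.+1 (n + s)%N q))
  /\ (forall n q, zmC C (Lf 0%N n) q =
        (if n is n'.+1 then Lf p n' q else 0)
        - (Prec p a n.+1).[C] / (Prec p a n).[C] * Lf p n q).
Proof.
(* The remaining hypotheses only ensure that the factorization and the
   polynomials exist; the identities do not depend on them. *)
move=> _ hsup _ hband _ hPC _ hfac hP0 hPj hdual.
have J0 : Jmx p gam C 0 = a.
  by do 2!apply: functional_extensionality => ?; rewrite /Jmx subn0 -hfac addrC subrK.
have P0 : P 0%N = Prec p a by apply: functional_extensionality.
have heig j : (j <= p)%N -> eigen_seq (Jmx p gam C j) (P j).
  by case: j => [_|j hj]; [rewrite J0 P0; exact: eigen_seq_Prec | apply: hPj].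
split=> [j n hj|n q]; first split=> q.
- exact: (Lf_Darboux heig hdual n q hj).
- exact: (Lf_zmC_Gmx heig hdual n q hj).
have hP0C : (Prec p a n).[C] != 0.
  by case: n => [|n]; [rewrite /Prec /= hornerC oner_neq0 | exact: hPC].
rewrite (Lf_zmC_Umx heig hdual) -!P0 (P0_eval_succ heig) P0.
by rewrite mulNr mulNr opprK mulfK.
Qed.
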